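(* Let $A\in\mathbb{R}^{n\times n}$ with spectral radius $\rho(A)<1$, let $C\in\mathbb{R}^{m\times n}$, and let $Q\in\mathbb{R}^{n\times n}$, $R\in\mathbb{R}^{m\times m}$ be symmetric positive definite, with $(A,C)$ observable and $(A,Q^{1/2})$ controllable. Let $\bar P$ be the unique stabilizing positive definite solution of the discrete-time algebraic Riccati equation $$\bar P = A\bar PA^{\intercal}+Q-(A\bar PA^{\intercal}+Q)C^{\intercal}\big(C(A\bar PA^{\intercal}+Q)C^{\intercal}+R\big)^{-1}C(A\bar PA^{\intercal}+Q).$$ Let $\bar\gamma\in(0,1)$ and $\mu\in(0,1)$. Let $(\lambda_k)_{k\ge1}$ be i.i.d. $\{0,1\}$-valued random variables with $\mathbb{P}[\lambda_k=0]=\bar\gamma$, and let $(u_k)_{k\ge1}$ be i.i.d. $\{0,1\}$-valued random variables with $\mathbb{P}[u_k=0]=\mu$, the two sequences being independent of each other. Let $P_0$ be a fixed symmetric positive semidefinite matrix and define recursively, for $k\ge1$, $$P_k=\begin{cases}\bar P, & \text{if } (\lambda_k,u_k)=(1,1),\\ AP_{k-1}A^{\intercal}+Q, & \text{if } \lambda_k=0 \text{ or } (\lambda_k,u_k)=(1,0).\end{cases}$$ Set $q=\bar\gamma+(1-\bar\gamma)\mu$. Then $$\lim_{k\to\infty}\mathbb{E}[P_k]=(1-\bar\gamma)(1-\mu)\,W+q\,S,$$ where $W=L(\sqrt{q}\,A,\bar P)$ and $S=L(\sqrt{q}\,A,Q)$.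
   Context: For a square matrix $T$ with $\rho(T)<1$ and a symmetric matrix $U$, $L(T,U)$ denotes the unique solution $V$ of the discrete-time Lyapunov equation $V=TVT^{\intercal}+U$, equivalently $L(T,U)=\sum_{j=0}^{\infty}T^jU(T^{\intercal})^j$. Here $P_k$ models the estimation error covariance of a remote legitimate user that receives the sensor's steady-state Kalman estimate (error covariance $\bar P$) only when the packet arrives ($\lambda_k=1$) and the sensor did not send noise ($u_k=1$), and otherwise predicts with the model $x_{k+1}=Ax_k+w_k$, $\mathrm{Cov}(w_k)=Q$. *)

From HB Require Import structures.
From mathcomp Require Import all_boot all_order all_algebra.
From mathcomp Require Import all_classical all_reals all_analysis.
From mathcomp Require complex.
Import complex.ComplexField.
Set Implicit Arguments.
Unset Strict Implicit.
Unset Printing Implicit Defensive.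
Import Order.TTheory GRing.Theory Num.Theory.
Import numFieldNormedType.Exports.
Local Open Scope ring_scope.

Section Defs.
Variable R : realType.

Definition cplx_mx n (A : 'M[R]_n) : 'M[complex.complex R]_n :=
  map_mx (fun x => complex.Complex x 0) A.

Definition cnorm2 (z : complex.complex R) : R :=
  complex.Re z ^+ 2 + complex.Im z ^+ 2.

Definition spectral_radius_lt1 n (A : 'M[R]_n) : Prop :=
  forall z : complex.complex R, eigenvalue (cplx_mx A) z -> cnorm2 z < 1.

Definition symmetric n (M : 'M[R]_n) : Prop := M^T = M.

Definition posdef n (M : 'M[R]_n) : Prop :=
  symmetric M /\ forall x : 'cV[R]_n, x != 0 -> 0 < (x^T *m M *m x) 0 0.

Definition possemidef n (M : 'M[R]_n) : Prop :=
  symmetric M /\ forall x : 'cV[R]_n, 0 <= (x^T *m M *m x) 0 0.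

Definition observable n m (A : 'M[R]_n) (C : 'M[R]_(m, n)) : Prop :=
  \rank (\mxcol_(k < n) (C *m A ^+ k)) = n.

Definition controllable n p (A : 'M[R]_n) (B : 'M[R]_(n, p)) : Prop :=
  \rank (\mxrow_(k < n) (A ^+ k *m B)) = n.

Definition prior n (A Q P : 'M[R]_n) : 'M[R]_n := A *m P *m A^T + Q.

Definition kgain n m (A Q P : 'M[R]_n) (C : 'M[R]_(m, n)) (Rn : 'M[R]_m)
  : 'M[R]_(n, m) :=
  prior A Q P *m C^T *m invmx (C *m prior A Q P *m C^T + Rn).

Definition dare n m (A Q : 'M[R]_n) (C : 'M[R]_(m, n)) (Rn : 'M[R]_m)
  (P : 'M[R]_n) : Prop :=
  P = prior A Q P - prior A Q P *m C^T
        *m invmx (C *m prior A Q P *m C^T + Rn) *m C *m prior A Q P.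

Definition stabilizing n m (A Q : 'M[R]_n) (C : 'M[R]_(m, n)) (Rn : 'M[R]_m)
  (P : 'M[R]_n) : Prop :=
  spectral_radius_lt1 ((1%:M - kgain A Q P C Rn *m C) *m A).

(* L(T,U) = sum_{j>=0} T^j U (T^T)^j  (entrywise limit of partial sums) *)
Definition lyap n (T U : 'M[R]_n) : 'M[R]_n :=
  \matrix_(i, j) limn (series (fun k : nat => (T ^+ k *m U *m (T^T) ^+ k) i j)).

(* The covariance recursion, pathwise.  lam k, u k : T -> bool stand for
   lambda_{k+1}, u_{k+1} (true = 1, false = 0). *)
Fixpoint Pseq {Omega : Type} n (A Q Pbar P0 : 'M[R]_n)
  (lam u : nat -> Omega -> bool) (k : nat) (w : Omega) : 'M[R]_n :=
  match k with
  | 0 => P0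
  | k'.+1 => if lam k' w && u k' w then Pbar
             else A *m Pseq A Q Pbar P0 lam u k' w *m A^T + Q
  end.

End Defs.

Local Open Scope classical_set_scope.

Definition iid_bernoulli_pair {d} {Omega : measurableType d} {R : realType}
  (P : probability Omega R) (lam u : nat -> Omega -> bool) (g mu : R) : Prop :=
  [/\ (forall k b, measurable [set w | lam k w = b]),
      (forall k b, measurable [set w | u k w = b]),
      (forall k, P [set w | lam k w = false] = g%:E),
      (forall k, P [set w | u k w = false] = mu%:E) &
      (forall (s1 s2 : seq nat) (a b : nat -> bool), uniq s1 -> uniq s2 ->
         P ((\bigcap_(k in [set k | k \in s1]) [set w | lam k w = a k])
             `&` (\bigcap_(k in [set k | k \in s2]) [set w | u k w = b k]))
         = ((\prod_(k <- s1) P [set w | lam k w = a k])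
             * (\prod_(k <- s2) P [set w | u k w = b k]))%E)].

From HB Require Import structures.
From mathcomp Require Import all_boot all_order all_algebra.
From mathcomp Require Import all_classical all_reals all_analysis.
From mathcomp Require Import complex.
From mathcomp Require Import ring lra zify.

(* Between two receptions the remote covariance follows the Lyapunov iteration
   f(X) = A X A^T + Q, so P_k = f^t(Pbar) where t is the time elapsed since the
   last reception among the first k steps, and P_k = f^k(P_0) if there was none.
   By independence this age is truncated-geometric: it equals t < k with
   probability (1 - q) q^t and "none" with probability q^k, where
   q = gbar + (1 - gbar) mu is the probability that a step brings no reception.
   Hence E[P_k] = sum_(t<k) (1 - q) q^t f^t(Pbar) + q^k f^k(P_0), and a summation
   by parts rewrites it as
     (1 - q) sum_(t<k) q^t A^t Pbar A^tT + q sum_(t<k) q^t A^t Q A^tT + q^k A^k P_0 A^kT,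
   i.e. partial sums of the series defining W and S plus a vanishing term.
   These series converge since q < 1 and rho(A) < 1 keeps the entries of A^k
   bounded (factor the characteristic polynomial over C and use Cayley-Hamilton). *)

Set Implicit Arguments.
Unset Strict Implicit.
Unset Printing Implicit Defensive.

Import Order.TTheory GRing.Theory Num.Theory.
Import numFieldNormedType.Exports.
Local Open Scope ring_scope.
Local Open Scope classical_set_scope.

Definition entrywise_bounded (F : numDomainType) m n (f : nat -> 'M[F]_(m, n)) :=
  forall a b, exists D, forall k, `|f k a b| <= D.

Lemma bounded_of_contractive_step (F : numFieldType) (d : nat -> F) (z c : F) :
  `|z| < 1 -> (forall k, `|d k.+1 - z * d k| <= c) -> exists D, forall k, `|d k| <= D.
Proof.
move=> z1 hc.
have c0 : 0 <= c by apply: le_trans (hc 0%N).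
have z1' : 0 < 1 - `|z| by rewrite subr_gt0.
exists (`|d 0%N| + c / (1 - `|z|)); elim=> [|k IH].
  by rewrite lerDl divr_ge0 // ltW.
set D := _ + _ in IH *.
have hD : `|z| * D + c <= D.
  have hD0 : (1 - `|z|) * D = (1 - `|z|) * `|d 0%N| + c.
    by rewrite /D mulrDr mulrCA divff ?mulr1 // gt_eqF.
  rewrite mulrBl mul1r in hD0.
  by rewrite addrC -lerBrDr hD0 lerDr mulr_ge0 // ltW.
have -> : d k.+1 = z * d k + (d k.+1 - z * d k) by rewrite addrC subrK.
apply: le_trans (ler_normD _ _) (le_trans _ hD).
by rewrite normrM lerD // ler_wpM2l.
Qed.

Lemma entrywise_bounded_mulmx_pow_root_factors (F : numClosedFieldType) n
    (M X : 'M[F]_n.+1) (s : seq F) :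
  {in s, forall z, `|z| < 1} ->
  entrywise_bounded (fun k => X * horner_mx M (\prod_(z <- s) ('X - z%:P)) * M ^+ k) ->
  entrywise_bounded (fun k => X * M ^+ k).
Proof.
elim: s X => [|z s IH] X hs hX.
  by move: hX; rewrite big_nil rmorph1 mulr1.
have shift k : X * (M - z%:M) * M ^+ k = X * M ^+ k.+1 - z *: (X * M ^+ k).
  by rewrite mulrBr mulrBl -mulrA -exprS -!mulmxE mul_mx_scalar -scalemxAl.
have hXz : entrywise_bounded (fun k => X * (M - z%:M) * M ^+ k).
  apply: IH => [y ys|]; first by apply: hs; rewrite inE ys orbT.
  by move: hX; rewrite big_cons rmorphM rmorphB /= horner_mx_X horner_mx_C !mulrA.
move=> a b; have [D hD] := hXz a b.
(* [X M^(k+1) - z X M^k] is bounded and [|z| < 1]. *)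
apply: (@bounded_of_contractive_step _ (fun k => (X * M ^+ k) a b) z D).
  by apply: hs; rewrite inE eqxx.
by move=> k; move: (hD k); rewrite shift !mxE.
Qed.

Lemma entrywise_bounded_pow (F : numClosedFieldType) n (M : 'M[F]_n.+1) :
  (forall z, eigenvalue M z -> `|z| < 1) -> entrywise_bounded (fun k => M ^+ k).
Proof.
move=> hev; have [rs Hrs] := closed_field_poly_normal (char_poly M).
rewrite (monicP (char_poly_monic M)) scale1r in Hrs.
rewrite (_ : (fun k => M ^+ k) = (fun k => 1 * M ^+ k)); last first.
  by apply: funext => k; rewrite mul1r.
apply: (@entrywise_bounded_mulmx_pow_root_factors _ _ M 1 rs).
  by move=> z zr; apply: hev; rewrite eigenvalue_root_char Hrs root_prod_XsubC.
by move=> a b; exists 0 => k; rewrite -Hrs Cayley_Hamilton mulr0 mul0r mxE normr0.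
Qed.

Lemma spectral_radius_lt1_pow_bounded (R : realType) n (A : 'M[R]_n) :
  spectral_radius_lt1 A -> entrywise_bounded (fun k => A ^+ k).
Proof.
case: n A => [|n] A hA a; first by case: a.
have cplx_pow k : cplx_mx A ^+ k = map_mx (real_complex R) (A ^+ k).
  have -> : cplx_mx A = map_mx (real_complex R) A by apply/matrixP => i j; rewrite !mxE.
  by rewrite rmorphXn.
have hev z : eigenvalue (cplx_mx A) z -> `|z| < 1.
  by move=> /hA hz; rewrite normc_def ltcR -sqrtr1 ltr_sqrt.
move=> b; have [D hD] := entrywise_bounded_pow hev a b.
exists (complex.Re D) => k; move: (hD k); rewrite cplx_pow mxE normc_def /=.
by rewrite expr0n /= addr0 sqrtr_sqr lecE => /andP[_ ->].
Qed.

Lemma entrywise_bounded_uniform (R : realDomainType) m n (f : nat -> 'M[R]_(m, n)) :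
  entrywise_bounded f -> exists K, forall k a b, `|f k a b| <= K.
Proof.
move=> hf; have [Kf hK] := choice (fun ab => hf ab.1 ab.2).
exists (\sum_ab `|Kf ab|) => k a b.
apply: le_trans (hK (a, b) k) _; apply: le_trans (ler_norm _) _.
by rewrite (bigD1 (a, b)) //= lerDl sumr_ge0.
Qed.

Lemma trmx_exp (R : comPzSemiRingType) n (A : 'M[R]_n) k : A^T ^+ k = (A ^+ k)^T.
Proof.
elim: k => [|k IH]; first by rewrite !expr0 trmx1.
by rewrite exprS IH exprSr -!mulmxE trmx_mul.
Qed.

Lemma entrywise_bounded_conj_pow (R : realDomainType) n (A M : 'M[R]_n) :
  entrywise_bounded (fun k => A ^+ k) ->
  entrywise_bounded (fun k => A ^+ k *m M *m A^T ^+ k).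
Proof.
move=> /entrywise_bounded_uniform[K hK] i j.
exists (\sum_b (\sum_a K * `|M a b|) * K) => k.
rewrite trmx_exp mxE; apply: le_trans (ler_norm_sum _ _ _) _.
apply: ler_sum => b _; rewrite !mxE normrM ler_pM //.
apply: le_trans (ler_norm_sum _ _ _) _; apply: ler_sum => a _.
by rewrite normrM ler_wpM2r.
Qed.

Lemma cvg_series_geometric_bounded (R : realType) (u : nat -> R) (B q : R) :
  0 <= q < 1 -> (forall t, `|u t| <= B) -> cvgn (series (fun t => q ^+ t * u t)).
Proof.
move=> /andP[q0 q1] hu; apply: normed_cvg.
apply: (@series_le_cvg _ _ (geometric B q)) => [t|t|t|].
- exact: normr_ge0.
- by rewrite /geometric /= mulr_ge0 ?exprn_ge0 // (le_trans _ (hu 0%N)).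
- by rewrite /geometric /= normrM ger0_norm ?exprn_ge0 // mulrC ler_wpM2r ?exprn_ge0.
- by apply: is_cvg_geometric_series; rewrite ger0_norm.
Qed.

Lemma lyap_scale_sqrtE (R : realType) n (A U : 'M[R]_n) (q : R) i j : 0 <= q ->
  lyap (Num.sqrt q *: A) U i j =
  limn (series (fun t => q ^+ t * (A ^+ t *m U *m A^T ^+ t) i j)).
Proof.
case: n A U i j => [|n] A U i j q0; first by case: i.
rewrite mxE; congr (limn (series _)); apply: funext => t /=.
rewrite linearZ /= !exprZn !mulmxE -!scalerAl -scalerAr scalerA mxE -exprMn.
by rewrite -expr2 sqr_sqrtr.
Qed.

Lemma iter_priorE (R : realType) n (A Q X : 'M[R]_n) t :
  iter t (prior A Q) X =
  A ^+ t *m X *m A^T ^+ t + \sum_(l < t) A ^+ l *m Q *m A^T ^+ l.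
Proof.
elim: t => [|t IH]; first by rewrite !expr0 mulmx1 mul1mx big_ord0 addr0.
rewrite iterS IH /prior big_ord_recl !expr0 mulmx1 mul1mx.
rewrite mulmxDr mulmxDl mulmx_sumr mulmx_suml -addrA [Q + _]addrC.
congr (_ + (_ + _)).
  by rewrite exprS exprSr !mulmxA.
by apply: eq_bigr => l _; rewrite lift0 exprS exprSr !mulmxA.
Qed.

Section ResetAge.
Variables (Omega : Type) (lam u : nat -> Omega -> bool).

Definition received k w := lam k w && u k w.

Fixpoint reset_age k w : option nat :=
  if k is k'.+1 then
    if received k' w then Some 0%N else omap succn (reset_age k' w)
  else None.

Lemma reset_age_NoneP k w :
  (reset_age k w == None) = all (fun i => ~~ received i w) (iota 0 k).
Proof.
elim: k => // k IH; rewrite -addn1 iotaD all_cat /= andbT addn1 /= -IH.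
by case: (received k w) => //=; case: (reset_age k w).
Qed.

Lemma reset_age_SomeP k t w :
  (reset_age k w == Some t) =
  [&& (t < k)%N, received (k.-1 - t) w & all (fun i => ~~ received i w) (iota (k - t) t)].
Proof.
elim: k t => // k IH [|t]; rewrite [reset_age _ _]/= succnK.
  by rewrite subn0 /=; case: (received k w); case: (reset_age k w).
have omapE : (omap succn (reset_age k w) == Some t.+1) = (reset_age k w == Some t).
  by case: (reset_age k w).
rewrite (fun_if (eq_op^~ (Some t.+1))) omapE IH ltnS subSS.
have [tk|] := ltnP t k; last by case: ifP.
rewrite -[t.+1]addn1 iotaD subnK ?(ltnW tk) // all_cat /= andbT.
have -> : (k - (t + 1) = k.-1 - t)%N by lia.
by case: (received k w); rewrite ?andbF ?andbT ?addn1.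
Qed.

Lemma reset_age_lt k t w : reset_age k w = Some t -> (t < k)%N.
Proof. by move/eqP; rewrite reset_age_SomeP => /andP[]. Qed.

Definition reset_pattern (J I : seq nat) : set Omega :=
  [set w | all (received ^~ w) J && all (fun i => ~~ received i w) I].

Lemma reset_pattern_cons J i I :
  reset_pattern J (i :: I) = reset_pattern J I `\` reset_pattern (i :: J) I.
Proof.
apply/seteqP; split => w; rewrite /reset_pattern /=.
  by case: received; case: all; case: all.
by case: received; case: all; case: all => -[].
Qed.

Lemma reset_pattern_consS J i I : reset_pattern (i :: J) I `<=` reset_pattern J I.
Proof. by move=> w; rewrite /reset_pattern /= -andbA => /andP[_]. Qed.

Lemma reset_age_SomeE k t : (t < k)%N ->
  [set w | reset_age k w = Some t] = reset_pattern [:: (k.-1 - t)%N] (iota (k - t) t).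
Proof.
move=> tk; apply/seteqP; split => w; rewrite /reset_pattern /= andbT.
  by move/eqP; rewrite reset_age_SomeP tk.
by move=> h; apply/eqP; rewrite reset_age_SomeP tk.
Qed.

Lemma reset_age_NoneE k : [set w | reset_age k w = None] = reset_pattern [::] (iota 0 k).
Proof.
by apply/seteqP; split => w; rewrite /reset_pattern /= -reset_age_NoneP => /eqP.
Qed.

End ResetAge.

Lemma Pseq_reset_age (R : realType) (Omega : Type) n (A Q Pbar P0 : 'M[R]_n)
    (lam u : nat -> Omega -> bool) k w :
  Pseq A Q Pbar P0 lam u k w =
  if reset_age lam u k w is Some t then iter t (prior A Q) Pbar
  else iter k (prior A Q) P0.
Proof.
elim: k => //= k ->; rewrite /received.
by case: (lam k w && u k w) => //; case: (reset_age lam u k w).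
Qed.

Section Expectation.
Variables (d : measure_display) (Omega : measurableType d) (R : realType).
Variable P : probability Omega R.

Lemma probability_eq_true (f : Omega -> bool) x :
  measurable [set w | f w = false] -> P [set w | f w = false] = x%:E ->
  P [set w | f w = true] = (1 - x)%:E.
Proof.
move=> mf Pf; have -> : [set w | f w = true] = ~` [set w | f w = false].
  by apply/seteqP; split => w /=; case: (f w).
by rewrite probability_setC // Pf.
Qed.

Lemma measurable_all (I : Type) (f : I -> Omega -> bool) (s : seq I) :
  (forall i, measurable [set w | f i w]) -> measurable [set w | all (f ^~ w) s].
Proof.
move=> mf; elim: s => [|i s IH].
  by rewrite (_ : [set w | _] = setT) //; apply/seteqP.
rewrite (_ : [set w | _] = [set w | f i w] `&` [set w | all (f ^~ w) s]).
  exact: measurableI.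
by apply/seteqP; split => w /andP.
Qed.

Lemma expectation_discrete (I : eqType) (s : seq I) (a : Omega -> I) (f p : I -> R) :
  uniq s -> (forall w, a w \in s) -> (forall x, measurable [set w | a w = x]) ->
  {in s, forall x, P [set w | a w = x] = (p x)%:E} ->
  (\int[P]_w (f (a w))%:E)%E = (\sum_(x <- s) f x * p x)%:E.
Proof.
move=> us sa ma Pa.
have -> : (fun w => (f (a w))%:E) =
    (fun w => (\sum_(x <- s) (f x)%:E * (\1_[set w | a w = x] w)%:E)%E).
  apply: funext => w; rewrite sumEFin (bigD1_seq (a w)) //= big1 => [|x].
    by rewrite indicE mem_set // mulr1 addr0.
  by rewrite eq_sym => /eqP nx; rewrite indicE memNset ?mulr0.
rewrite integral_sum // => [|x]; last exact/integrableZl/integrable_indic.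
rewrite -sumEFin big_seq [RHS]big_seq; apply: eq_bigr => x xs.
rewrite integralZl ?integrable_indic // integral_indic // setIT EFinM.
by congr (_ * _)%E; exact: Pa.
Qed.

End Expectation.

Section ResetProbability.
Variables (d : measure_display) (Omega : measurableType d) (R : realType).
Variables (P : probability Omega R) (lam u : nat -> Omega -> bool) (g mu : R).
Hypothesis iid : iid_bernoulli_pair P lam u g mu.

Let p := (1 - g) * (1 - mu).

Lemma measurable_received k : measurable [set w | received lam u k w].
Proof.
have [mlam mu' _ _ _] := iid.
rewrite (_ : [set w | _] = [set w | lam k w = true] `&` [set w | u k w = true]).
  exact: measurableI.
by apply/seteqP; split => w /andP.
Qed.

Lemma measurable_reset_pattern J I : measurable (reset_pattern lam u J I).
Proof.
rewrite (_ : reset_pattern _ _ _ _ = [set w | all (received lam u ^~ w) J] `&`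
                                  [set w | all (fun i => ~~ received lam u i w) I]).
  apply: measurableI; apply: measurable_all => i; first exact: measurable_received.
  have -> : [set w | ~~ received lam u i w] = ~` [set w | received lam u i w].
    by apply/seteqP; split => w /= /negP.
  exact/measurableC/measurable_received.
by apply/seteqP; split => w /andP.
Qed.

Lemma prob_reset_pattern_received J :
  uniq J -> P (reset_pattern lam u J [::]) = (p ^+ size J)%:E.
Proof.
have [mlam mu' Plam Pu indep] := iid.
move=> uJ; have -> : reset_pattern lam u J [::] =
    \bigcap_(k in [set k | k \in J]) [set w | lam k w = (fun=> true) k] `&`
    \bigcap_(k in [set k | k \in J]) [set w | u k w = (fun=> true) k].
  apply/seteqP; split => w; rewrite /reset_pattern /= andbT.
    by move/allP => h; split => k /h /andP[].
  by move=> [hl hu]; apply/allP => k kJ; rewrite /received (hl k kJ) (hu k kJ).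
rewrite indep //.
under eq_bigr do rewrite (probability_eq_true (mlam _ _) (Plam _)).
under [X in (_ * X)%E]eq_bigr do rewrite (probability_eq_true (mu' _ _) (Pu _)).
by rewrite !prodEFin !big_const_seq count_predT !iter_mulr_1 -EFinM exprMn.
Qed.

Lemma prob_reset_pattern J I : uniq J -> uniq I -> all (fun i => i \notin J) I ->
  P (reset_pattern lam u J I) = (p ^+ size J * (1 - p) ^+ size I)%:E.
Proof.
elim: I J => [|i I IH] J uJ.
  by move=> _ _; rewrite prob_reset_pattern_received // expr0 mulr1.
move=> /= /andP[iI uI] /andP[iJ dis].
have IHi : P (reset_pattern lam u (i :: J) I) = (p ^+ (size J).+1 * (1 - p) ^+ size I)%:E.
  apply: (IH (i :: J)) => //=; first by rewrite iJ.
  apply/allP => k kI; rewrite inE negb_or (allP dis k kI) andbT.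
  by apply: contraNneq iI => <-.
have mR := measurable_reset_pattern.
rewrite reset_pattern_cons measureD ?setIidr; [|exact: reset_pattern_consS|exact: mR..|].
  transitivity ((p ^+ size J * (1 - p) ^+ size I)%:E -
                (p ^+ (size J).+1 * (1 - p) ^+ size I)%:E)%E.
    by congr (_ - _)%E; [exact: IH | exact: IHi].
  by rewrite -EFinB !exprS; congr (_%:E); ring.
by apply: le_lt_trans (probability_le1 P (mR _ _)) _; rewrite ltry.
Qed.

Lemma measurable_reset_age k o : measurable [set w | reset_age lam u k w = o].
Proof.
case: o => [t|]; last by rewrite reset_age_NoneE; exact: measurable_reset_pattern.
have [tk|kt] := ltnP t k.
  by rewrite reset_age_SomeE //; exact: measurable_reset_pattern.
rewrite (_ : [set w | _] = set0) //; apply/seteqP; split => // w /= wt.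
by have := reset_age_lt wt; rewrite ltnNge kt.
Qed.

Lemma prob_reset_age_Some k t : (t < k)%N ->
  P [set w | reset_age lam u k w = Some t] = (p * (1 - p) ^+ t)%:E.
Proof.
move=> tk; rewrite reset_age_SomeE // prob_reset_pattern ?iota_uniq //=.
  by rewrite size_iota expr1.
by apply/allP => x; rewrite mem_iota inE => /andP[h1 h2]; lia.
Qed.

Lemma prob_reset_age_None k :
  P [set w | reset_age lam u k w = None] = ((1 - p) ^+ k)%:E.
Proof.
rewrite reset_age_NoneE prob_reset_pattern ?iota_uniq //; last exact/allP.
by rewrite size_iota expr0 mul1r.
Qed.

Lemma expectation_Pseq n (A Q Pbar P0 : 'M[R]_n) k i j :
  (\int[P]_w ((Pseq A Q Pbar P0 lam u k w) i j)%:E)%E =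
  ((\sum_(t < k) (p * (1 - p) ^+ t) *: iter t (prior A Q) Pbar +
    (1 - p) ^+ k *: iter k (prior A Q) P0) i j)%:E.
Proof.
pose f o := (if o is Some t then iter t (prior A Q) Pbar else iter k (prior A Q) P0) i j.
pose pr o := if o is Some t then p * (1 - p) ^+ t else (1 - p) ^+ k.
have -> : (fun w => ((Pseq A Q Pbar P0 lam u k w) i j)%:E) =
          (fun w => (f (reset_age lam u k w))%:E).
  by apply: funext => w; rewrite Pseq_reset_age.
rewrite (@expectation_discrete _ _ _ _ _ (None :: map Some (index_iota 0 k)) _ f pr).
- rewrite big_cons big_map big_mkord.
  rewrite !mxE summxE addrC mulrC; congr (_%:E + _%:E).
  by apply: eq_bigr => t _; rewrite mxE mulrC.
- rewrite /= (map_inj_uniq Some_inj) /index_iota iota_uniq andbT.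
  by apply/mapP => -[].
- move=> w; case e: reset_age => [t|]; rewrite inE //=.
  by rewrite map_f // mem_index_iota (reset_age_lt e).
- exact: measurable_reset_age.
- case=> [t|]; last by move=> _; exact: prob_reset_age_None.
  rewrite inE /= (mem_map Some_inj) mem_index_iota => tk.
  exact: prob_reset_age_Some.
Qed.

End ResetProbability.

Lemma sum_geometric_partial_sums (R : comPzRingType) (V : lmodType R) (q : R)
    (Z : nat -> V) k :
  \sum_(t < k) ((1 - q) * q ^+ t) *: \sum_(l < t) Z l + q ^+ k *: \sum_(l < k) Z l =
  q *: \sum_(t < k) q ^+ t *: Z t.
Proof.
elim: k => [|k IH]; first by rewrite !big_ord0 !scaler0 add0r.
rewrite !big_ord_recr /= -[X in X + _ + _](addrK (q ^+ k *: \sum_(l < k) Z l)) IH.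
rewrite !scalerDr scalerA -exprS mulrBl mul1r -exprS scalerBl.
by rewrite -[_ - _ + _]addrA addKr -addrA addKr.
Qed.

Lemma geometric_mix_iter_prior (R : realType) n (A Q X Y : 'M[R]_n) (q : R) k :
  \sum_(t < k) ((1 - q) * q ^+ t) *: iter t (prior A Q) X + q ^+ k *: iter k (prior A Q) Y =
  (1 - q) *: \sum_(t < k) q ^+ t *: (A ^+ t *m X *m A^T ^+ t) +
  q *: \sum_(t < k) q ^+ t *: (A ^+ t *m Q *m A^T ^+ t) +
  q ^+ k *: (A ^+ k *m Y *m A^T ^+ k).
Proof.
under eq_bigr do rewrite iter_priorE scalerDr.
rewrite iter_priorE big_split /= scalerDr.
rewrite -(sum_geometric_partial_sums q (fun t => A ^+ t *m Q *m A^T ^+ t)).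
rewrite [(1 - q) *: _]scaler_sumr; under [in RHS]eq_bigr do rewrite scalerA.
by rewrite -!addrA; congr (_ + (_ + _)); rewrite addrC.
Qed.

Theorem lemma2 (R : realType) (n m : nat)
  (A : 'M[R]_n) (C : 'M[R]_(m, n)) (Q Qh : 'M[R]_n) (Rn : 'M[R]_m)
  (Pbar P0 : 'M[R]_n) (gbar mu : R)
  (d : measure_display) (Omega : measurableType d) (P : probability Omega R)
  (lam u : nat -> Omega -> bool) :
  spectral_radius_lt1 A ->
  posdef Q -> posdef Rn ->
  observable A C ->
  possemidef Qh -> Qh *m Qh = Q -> controllable A Qh ->
  posdef Pbar -> dare A Q C Rn Pbar -> stabilizing A Q C Rn Pbar ->
  0 < gbar < 1 -> 0 < mu < 1 ->
  iid_bernoulli_pair P lam u gbar mu ->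
  possemidef P0 ->
  let q := gbar + (1 - gbar) * mu in
  let W := lyap (Num.sqrt q *: A) Pbar in
  let S := lyap (Num.sqrt q *: A) Q in
  forall i j : 'I_n,
    (fun k : nat => (\int[P]_w ((Pseq A Q Pbar P0 lam u k w) i j)%:E)%E)
      @ \oo --> ((((1 - gbar) * (1 - mu)) *: W + q *: S) i j)%:E.
Proof.
move=> hA _ _ _ _ _ _ _ _ _ /andP[g0 g1] /andP[m0 m1] iid _ q W S i j.
have q01 : 0 <= q < 1 by apply/andP; split; rewrite /q; nra.
have hq : 1 - (1 - gbar) * (1 - mu) = q by rewrite /q; ring.
have hp : (1 - gbar) * (1 - mu) = 1 - q by rewrite -hq; ring.
pose weighted U := series (fun t => q ^+ t * (A ^+ t *m U *m A^T ^+ t) i j).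
have cvg_weighted U : cvgn (weighted U).
  have [B hB] := entrywise_bounded_conj_pow U (spectral_radius_lt1_pow_bounded hA) i j.
  exact: cvg_series_geometric_bounded q01 hB.
have -> : (fun k => (\int[P]_w ((Pseq A Q Pbar P0 lam u k w) i j)%:E)%E) =
    (fun k => ((1 - q) * weighted Pbar k + q * weighted Q k +
               q ^+ k * (A ^+ k *m P0 *m A^T ^+ k) i j)%:E).
  apply: funext => k; rewrite (expectation_Pseq iid) hq hp geometric_mix_iter_prior.
  rewrite !mxE !summxE /weighted /series /= !big_mkord.
  by congr (_ * _ + _ * _ + _)%:E; apply: eq_bigr => t _; rewrite mxE.
have q0 : 0 <= q by case/andP: q01.
have hW : W i j = limn (weighted Pbar) by exact: lyap_scale_sqrtE.
have hS : S i j = limn (weighted Q) by exact: lyap_scale_sqrtE.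
clearbody W S; rewrite !mxE hW hS hp.
apply: cvg_EFin; first exact: nearW.
rewrite -[X in _ --> X]addr0; apply: cvgD.
  exact: cvgD (cvgMl_tmp (cvg_weighted Pbar)) (cvgMl_tmp (cvg_weighted Q)).
exact: cvg_series_cvg_0 (cvg_weighted P0).
Qed.
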